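(* Let $n \ge 3$, let $u_1,u_2 \in M_n(\mathbb C)$ be unitaries such that $\{1_n, u_1^*u_2, u_2^*u_1\}$ is linearly independent, let $0<t<1$, and define $\Phi\colon M_n(\mathbb C)\to M_n(\mathbb C)$ by $\Phi(x) = t\,u_1xu_1^* + (1-t)\,u_2xu_2^*$. Then for every integer $k \ge 2$, $\Phi$ is $k$-noisy if and only if $t \in k^{-1}\mathbb Z$. In particular, if $t$ is irrational, $\Phi$ is a mixture of unitaries that is not $k$-noisy for any $k\ge 2$.
   Context: A linear map $\Phi\colon M_n(\mathbb C)\to M_n(\mathbb C)$ is factorizable with ancilla $(\mathcal A,\tau)$ if $(\mathcal A,\tau)$ is a von Neumann algebra with a normal faithful tracial state $\tau$ and there is a unitary $u \in M_n(\mathbb C)\otimes \mathcal A$ with $\Phi(x) = (\mathrm{id}_n\otimes\tau)(u(x\otimes 1_{\mathcal A})u^* )$ for all $x\in M_n(\mathbb C)$. $\Phi$ is called $k$-noisy if it is factorizable with ancilla $(M_k(\mathbb C),\mathrm{tr}_k)$, where $\mathrm{tr}_k$ is the normalized trace. *)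

From HB Require Import structures.
From mathcomp Require Import all_boot all_order all_algebra.
From mathcomp Require Import reals.
From mathcomp Require Import complex mxtens.

Set Implicit Arguments.
Unset Strict Implicit.
Unset Printing Implicit Defensive.

Import Order.TTheory GRing.Theory Num.Theory.
Local Open Scope ring_scope.

Definition adjmx (R : realType) (m n : nat) (A : 'M[R[i]]_(m, n)) : 'M[R[i]]_(n, m) :=
  (map_mx (@conjc R) A)^T.

Definition unitary_mx (R : realType) (n : nat) (u : 'M[R[i]]_n) : Prop :=
  u *m adjmx u = 1%:M /\ adjmx u *m u = 1%:M.

(* (id_n (x) tr_k) : M_n (x) M_k -> M_n, with tr_k the normalized trace,
   where M_n (x) M_k is identified with M_{n*k} via the Kronecker product
   (tensmx) indexing convention mxtens_index. *)
Definition ptrace_norm (R : realType) (n k : nat) (Y : 'M[R[i]]_(n * k)) : 'M[R[i]]_n :=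
  \matrix_(i < n, j < n)
     (k%:R^-1 * \sum_(a < k) Y (mxtens_index (i, a)) (mxtens_index (j, a))).

Arguments ptrace_norm {R n} k Y.

(* Phi is k-noisy: factorizable with ancilla (M_k(C), tr_k). *)
Definition k_noisy (R : realType) (n k : nat) (Phi : 'M[R[i]]_n -> 'M[R[i]]_n) : Prop :=
  exists U : 'M[R[i]]_(n * k),
    unitary_mx U /\
    forall x : 'M[R[i]]_n,
      Phi x = ptrace_norm k (U *m (x *t (1%:M : 'M[R[i]]_k)) *m adjmx U).

(* A k-noisy dilation U of Phi gives the Kraus form Phi(x) = k^-1 sum_(a,b) U_ab x U_ab^*, where
   the U_ab are the n x n blocks of U.  Comparing the Choi forms of the two expressions of Phi, a
   matrix orthogonal to u1 and u2 is orthogonal to every U_ab; hence each U_ab lies in the span of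
   u1 and u2, i.e. U = u1 (x) A + u2 (x) B.  Since 1, u1^* u2, u2^* u1 are linearly independent,
   unitarity of U splits into A^* A + B^* B = 1 and A B^* = 0, so A^* A is a projection.  Its trace,
   read off with the vector of the dual basis of (u1, u2) that is orthogonal to u2, is k t; thus
   k t is its rank.  Conversely, for t = r / k and P the rank-r coordinate projection,
   u1 (x) P + u2 (x) (1 - P) is a unitary dilation of Phi. *)

From HB Require Import structures.
From mathcomp Require Import all_boot all_order all_algebra.
From mathcomp Require Import reals.
From mathcomp Require Import complex mxtens vector.
From mathcomp.algebra_tactics Require Import ring.

Set Implicit Arguments.
Unset Strict Implicit.
Unset Printing Implicit Defensive.

Import Order.TTheory GRing.Theory Num.Theory.
Local Open Scope ring_scope.

Section Adjoint.
Variable R : realType.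
Local Notation C := R[i].

Lemma adjmxD m n (A B : 'M[C]_(m, n)) : adjmx (A + B) = adjmx A + adjmx B.
Proof. by apply/matrixP => i j; rewrite !mxE rmorphD. Qed.

Lemma adjmxB m n (A B : 'M[C]_(m, n)) : adjmx (A - B) = adjmx A - adjmx B.
Proof. by apply/matrixP => i j; rewrite !mxE rmorphB. Qed.

Lemma adjmxZ m n a (A : 'M[C]_(m, n)) : adjmx (a *: A) = a^* *: adjmx A.
Proof. by apply/matrixP => i j; rewrite !mxE rmorphM. Qed.

Lemma adjmxK m n (A : 'M[C]_(m, n)) : adjmx (adjmx A) = A.
Proof. by apply/matrixP => i j; rewrite !mxE conjcK. Qed.

Lemma adjmx_pid m n r : adjmx (pid_mx r : 'M[C]_(m, n)) = pid_mx r.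
Proof. by rewrite /adjmx map_pid_mx tr_pid_mx. Qed.

Lemma adjmx1 n : adjmx (1%:M : 'M[C]_n) = 1%:M.
Proof. by rewrite -pid_mx_1 adjmx_pid. Qed.

Lemma adjmx_tens m n p q (A : 'M[C]_(m, n)) (B : 'M[C]_(p, q)) :
  adjmx (A *t B) = adjmx A *t adjmx B.
Proof. by rewrite /adjmx map_mxT trmx_tens. Qed.

End Adjoint.

Section Tensor.
Variable R : comPzRingType.

Lemma tensmxDr m n p q (A : 'M[R]_(m, n)) (M N : 'M[R]_(p, q)) :
  A *t (M + N) = A *t M + A *t N.
Proof.
apply/matrixP => i j; case: (mxtens_indexP i) => i0 i1.
by case: (mxtens_indexP j) => j0 j1; rewrite !mxE !mxtens_indexK /= ?mxE mulrDr.
Qed.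

Lemma tensmx1 m n : (1%:M : 'M[R]_m) *t (1%:M : 'M[R]_n) = 1%:M.
Proof.
apply/matrixP => i j; case: (mxtens_indexP i) => i0 i1.
case: (mxtens_indexP j) => j0 j1; rewrite tensmxE !mxE.
rewrite (inj_eq (can_inj (@mxtens_indexK m n))) xpair_eqE.
by case: (i0 == j0); case: (i1 == j1); rewrite ?mulr1n ?mulr0n ?mulr1 ?mulr0.
Qed.

End Tensor.

(* Locked: otherwise rewriting compares Gram entries by conversion, unfolding the traces. *)
HB.lock Definition hsdot (R : realType) n (X Y : 'M[R[i]]_n) : R[i] := \tr (adjmx X *m Y).

Section HilbertSchmidt.
Variables (R : realType) (n : nat).
Local Notation C := R[i].
Implicit Types X Y Z : 'M[C]_n.

Lemma hsdot_mxtrace X Y : hsdot X Y = \tr (adjmx X *m Y).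
Proof. by rewrite hsdot.unlock. Qed.

Lemma hsdotE X Y : hsdot X Y = \sum_i \sum_j (X i j)^* * Y i j.
Proof.
rewrite !hsdot_mxtrace /mxtrace exchange_big; apply: eq_bigr => j _; rewrite !mxE.
by apply: eq_bigr => i _; rewrite !mxE.
Qed.

Lemma hsdotDr X Y Z : hsdot X (Y + Z) = hsdot X Y + hsdot X Z.
Proof. by rewrite !hsdot_mxtrace mulmxDr mxtraceD. Qed.

Lemma hsdotBr X Y Z : hsdot X (Y - Z) = hsdot X Y - hsdot X Z.
Proof. by rewrite !hsdot_mxtrace mulmxBr raddfB. Qed.

Lemma hsdotZr a X Y : hsdot X (a *: Y) = a * hsdot X Y.
Proof. by rewrite !hsdot_mxtrace -scalemxAr mxtraceZ. Qed.

Lemma hsdotBl X Y Z : hsdot (Y - Z) X = hsdot Y X - hsdot Z X.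
Proof. by rewrite !hsdot_mxtrace adjmxB mulmxBl raddfB. Qed.

Lemma hsdotZl a X Y : hsdot (a *: Y) X = a^* * hsdot Y X.
Proof. by rewrite !hsdot_mxtrace adjmxZ -scalemxAl mxtraceZ. Qed.

Lemma hsdotC X Y : hsdot Y X = (hsdot X Y)^*.
Proof.
rewrite !hsdotE rmorph_sum; apply: eq_bigr => i _; rewrite rmorph_sum.
by apply: eq_bigr => j _; rewrite rmorphM /= conjCK mulrC.
Qed.

Lemma hsdot_eq0 X : hsdot X X = 0 -> X = 0.
Proof.
have sq_ge0 (z : C) : 0 <= z^* * z by rewrite mulrC mulcJ_ge0.
rewrite hsdotE => /psumr_eq0P X0; apply/matrixP => i j; rewrite mxE.
have /psumr_eq0P Xi0 := X0 (fun i _ => sumr_ge0 _ (fun j _ => sq_ge0 _)) i isT.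
move/eqP: (Xi0 (fun j _ => sq_ge0 _) j isT).
by rewrite mulf_eq0 conjC_eq0 orbb => /eqP.
Qed.

End HilbertSchmidt.

Section Gram.
Variables (R : realType) (n : nat).
Local Notation C := R[i].
Implicit Types u v X Y : 'M[C]_n.

Definition gram_det u v : C := hsdot u u * hsdot v v - hsdot u v * hsdot v u.

Lemma gram_detC u v : gram_det v u = gram_det u v.
Proof. by rewrite /gram_det mulrC [hsdot v u * _]mulrC. Qed.

Lemma gram_det_neq0 u v : u != 0 -> (forall a, v != a *: u) -> gram_det u v != 0.
Proof.
move=> u0 vNu; apply/eqP => D0.
have uu0 : hsdot u u != 0 by apply: contra_neq u0 => /hsdot_eq0.
pose Z := hsdot u u *: v - hsdot u v *: u.
have : hsdot Z Z = hsdot u u * gram_det u v.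
  rewrite /Z /gram_det !(hsdotBl, hsdotBr, hsdotZl, hsdotZr).
  by rewrite -(hsdotC u u); ring.
rewrite D0 mulr0 => /hsdot_eq0/eqP; rewrite subr_eq0 => /eqP uv.
apply/negP: (vNu (hsdot u v / hsdot u u)); rewrite negbK.
by rewrite [_ / _]mulrC -scalerA -uv scalerA mulVf ?scale1r.
Qed.

(* Cramer's rule for the Gram system of (u, v): biorthogonal to u and v. *)
Definition dual_mx u v : 'M[C]_n :=
  ((gram_det u v)^*)^-1 *: ((hsdot v v)^* *: u - (hsdot u v)^* *: v).

Lemma hsdot_dual_mx u v X :
  hsdot (dual_mx u v) X =
    (gram_det u v)^-1 * (hsdot v v * hsdot u X - hsdot u v * hsdot v X).
Proof. by rewrite hsdotZl hsdotBl !hsdotZl fmorphV /= !conjCK. Qed.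

Lemma hsdot_dual_mx_l u v : gram_det u v != 0 -> hsdot (dual_mx u v) u = 1.
Proof. by move=> D0; rewrite hsdot_dual_mx /gram_det in D0 *; field. Qed.

Lemma hsdot_dual_mx_r u v : hsdot (dual_mx u v) v = 0.
Proof. by rewrite hsdot_dual_mx [hsdot v v * _]mulrC subrr mulr0. Qed.

Definition span2_proj u v X : 'M[C]_n :=
  hsdot (dual_mx u v) X *: u + hsdot (dual_mx v u) X *: v.

Lemma span2_projC u v X : span2_proj v u X = span2_proj u v X.
Proof. exact: addrC. Qed.

Lemma hsdot_span2_residual u v X :
  gram_det u v != 0 -> hsdot u (X - span2_proj u v X) = 0.
Proof.
move=> D0; rewrite hsdotBr hsdotDr !hsdotZr !hsdot_dual_mx (gram_detC u v).
by rewrite /gram_det in D0 *; field.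
Qed.

Lemma span2_proj_id u v X : gram_det u v != 0 ->
  (forall Y, hsdot Y u = 0 -> hsdot Y v = 0 -> hsdot Y X = 0) ->
  X = span2_proj u v X.
Proof.
move=> D0 orthX; pose Z := X - span2_proj u v X.
have Zu : hsdot Z u = 0 by rewrite hsdotC hsdot_span2_residual ?conjC0.
have Zv : hsdot Z v = 0.
  by rewrite hsdotC /Z -span2_projC hsdot_span2_residual ?conjC0 // gram_detC.
have : hsdot Z Z = 0.
  by rewrite {2}/Z hsdotBr hsdotDr !hsdotZr Zu Zv orthX // !mulr0 addr0 subr0.
by move/hsdot_eq0/eqP; rewrite subr_eq0 => /eqP.
Qed.

End Gram.

Lemma big_mxtens_index (V : nmodType) m n (F : 'I_(m * n) -> V) :
  \sum_p F p = \sum_(i < m) \sum_(a < n) F (mxtens_index (i, a)).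
Proof.
rewrite (reindex (@mxtens_index m n)) /=; first by rewrite pair_big; apply: eq_bigr => -[].
by exists (@mxtens_unindex m n) => p _; [apply: mxtens_indexK | apply: mxtens_unindexK].
Qed.

Section TensorBlocks.
Variables (R : realType) (n k : nat).
Local Notation C := R[i].
Implicit Types U V : 'M[C]_(n * k).

(* U = \sum_(a, b) tens_block U a b (x) E_ab, reading M_(n * k) as M_n (x) M_k via mxtens_index. *)
Definition tens_block U (a b : 'I_k) : 'M[C]_n :=
  \matrix_(i, j) U (mxtens_index (i, a)) (mxtens_index (j, b)).

Lemma tens_blockP U V : (forall a b, tens_block U a b = tens_block V a b) -> U = V.
Proof.
move=> eqUV; apply/matrixP => p q.
case: (mxtens_indexP p) => i a; case: (mxtens_indexP q) => j b.
by move/matrixP/(_ i j): (eqUV a b); rewrite !mxE.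
Qed.

Lemma tens_blockD U V a b :
  tens_block (U + V) a b = tens_block U a b + tens_block V a b.
Proof. by apply/matrixP => i j; rewrite !mxE. Qed.

Lemma tens_block_tens (A : 'M[C]_n) (M : 'M[C]_k) a b :
  tens_block (A *t M) a b = M a b *: A.
Proof. by apply/matrixP => i j; rewrite !mxE !mxtens_indexK mulrC. Qed.

Lemma ptrace_norm_conj U (x : 'M[C]_n) :
  ptrace_norm k (U *m (x *t 1%:M) *m adjmx U) =
  k%:R^-1 *: \sum_a \sum_b tens_block U a b *m x *m adjmx (tens_block U a b).
Proof.
apply/matrixP => i i'; rewrite !mxE; congr (_ * _).
rewrite summxE; apply: eq_bigr => a _; rewrite summxE [LHS]mxE big_mxtens_index.
rewrite exchange_big; apply: eq_bigr => b _; rewrite !mxE; apply: eq_bigr => l _.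
rewrite !mxE big_mxtens_index; congr (_ * _); apply: eq_bigr => j _; rewrite !mxE.
rewrite (bigD1 b) //= big1 => [|c /negbTE cb]; rewrite tensmxE mxE.
  by rewrite eqxx mulr1 addr0.
by rewrite cb !mulr0.
Qed.

End TensorBlocks.

Section ChoiForm.
Variables (R : realType) (n : nat).
Local Notation C := R[i].
Implicit Types (F G : 'M[C]_n -> 'M[C]_n) (L Y : 'M[C]_n).

Definition choi_form F Y : C :=
  \sum_i \sum_j \sum_k \sum_l (Y i j)^* * Y k l * F (delta_mx j l) i k.

Lemma eq_choi_form F G Y : F =1 G -> choi_form F Y = choi_form G Y.
Proof.
move=> FG; rewrite /choi_form.
by under eq_bigr do under eq_bigr do under eq_bigr do under eq_bigr do rewrite FG.
Qed.

Lemma choi_formD F G Y :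
  choi_form (fun x => F x + G x) Y = choi_form F Y + choi_form G Y.
Proof.
rewrite /choi_form -big_split; apply: eq_bigr => i _; rewrite -big_split.
apply: eq_bigr => j _; rewrite -big_split; apply: eq_bigr => k _.
by rewrite -big_split; apply: eq_bigr => l _; rewrite mxE mulrDr.
Qed.

Lemma choi_formZ a F Y : choi_form (fun x => a *: F x) Y = a * choi_form F Y.
Proof.
rewrite /choi_form mulr_sumr; apply: eq_bigr => i _; rewrite mulr_sumr.
apply: eq_bigr => j _; rewrite mulr_sumr; apply: eq_bigr => k _.
by rewrite mulr_sumr; apply: eq_bigr => l _; rewrite mxE mulrCA.
Qed.

Lemma choi_form_sum (I : Type) (r : seq I) (F : I -> 'M[C]_n -> 'M[C]_n) Y :
  choi_form (fun x => \sum_(a <- r) F a x) Y = \sum_(a <- r) choi_form (F a) Y.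
Proof.
elim: r => [|a r IHr]; last first.
  by rewrite big_cons -IHr -choi_formD; apply: eq_choi_form => x; rewrite big_cons.
rewrite big_nil /choi_form big1 // => i _; rewrite big1 // => j _.
by rewrite big1 // => k _; rewrite big1 // => l _; rewrite big_nil mxE mulr0.
Qed.

Lemma choi_form_conj L Y :
  choi_form (fun x => L *m x *m adjmx L) Y = hsdot Y L * (hsdot Y L)^*.
Proof.
rewrite /choi_form !hsdotE rmorph_sum big_distrl; apply: eq_bigr => i _.
rewrite big_distrl; apply: eq_bigr => j _; rewrite big_distrr.
apply: eq_bigr => k _; rewrite rmorph_sum big_distrr; apply: eq_bigr => l _.
rewrite -[delta_mx j l](@mul_delta_mx _ n 1 n 0 j l) mulmxA -colE -mulmxA -rowE.
rewrite !mxE big_ord1 !mxE rmorphM /= conjCK.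
by rewrite -!mulrA; congr (_ * _); rewrite mulrCA.
Qed.

End ChoiForm.

Section KrausBlocks.
Variables (R : realType) (n k : nat) (u1 u2 : 'M[R[i]]_n) (t : R).
Variable U : 'M[R[i]]_(n * k).
Local Notation C := R[i].
Local Notation K := (tens_block U).
Hypothesis k_gt0 : (0 < k)%N.
Hypothesis U_dilates : forall x,
  (t%:C)%C *: (u1 *m x *m adjmx u1) + ((1 - t)%:C)%C *: (u2 *m x *m adjmx u2) =
  ptrace_norm k (U *m (x *t 1%:M) *m adjmx U).

Lemma choi_form_dilation Y :
  (t%:C)%C * (hsdot Y u1 * (hsdot Y u1)^*) +
    ((1 - t)%:C)%C * (hsdot Y u2 * (hsdot Y u2)^*) =
  k%:R^-1 * \sum_a \sum_b hsdot Y (K a b) * (hsdot Y (K a b))^*.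
Proof.
rewrite -!choi_form_conj -!choi_formZ -choi_formD (eq_choi_form _ U_dilates).
rewrite (eq_choi_form _ (ptrace_norm_conj U)) choi_formZ choi_form_sum; congr (_ * _).
apply: eq_bigr => a _; rewrite choi_form_sum.
by apply: eq_bigr => b _; rewrite choi_form_conj.
Qed.

Lemma tens_block_span2 a b : gram_det u1 u2 != 0 -> K a b = span2_proj u1 u2 (K a b).
Proof.
move=> D0; apply: span2_proj_id => // Y Yu1 Yu2.
have sq_ge0 (z : C) : 0 <= z * z^* by exact: mulcJ_ge0.
move: (choi_form_dilation Y); rewrite Yu1 Yu2 !mul0r !mulr0 addr0 => /esym/eqP.
rewrite mulf_eq0 invr_eq0 pnatr_eq0 eqn0Ngt k_gt0 /= => /eqP/psumr_eq0P S.
have /psumr_eq0P Sa := S (fun a _ => sumr_ge0 _ (fun b _ => sq_ge0 _)) a isT.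
move/eqP: (Sa (fun b _ => sq_ge0 _) b isT).
by rewrite mulf_eq0 conjC_eq0 orbb => /eqP.
Qed.

Definition span2_coef (u v : 'M[C]_n) : 'M[C]_k :=
  \matrix_(a, b) hsdot (dual_mx u v) (K a b).

Lemma tens_span2_decomp : gram_det u1 u2 != 0 ->
  U = u1 *t span2_coef u1 u2 + u2 *t span2_coef u2 u1.
Proof.
move=> D0; apply: tens_blockP => a b.
by rewrite tens_blockD !tens_block_tens !mxE; apply: tens_block_span2.
Qed.

Lemma mxtrace_span2_coef : gram_det u1 u2 != 0 ->
  \tr (adjmx (span2_coef u1 u2) *m span2_coef u1 u2) = k%:R * (t%:C)%C.
Proof.
move=> D0; have := choi_form_dilation (dual_mx u1 u2).
rewrite hsdot_dual_mx_l // hsdot_dual_mx_r conjC1 conjC0 !mulr1 !mulr0 addr0 => ->.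
rewrite mulrA divff ?pnatr_eq0 -?lt0n // mul1r.
rewrite -hsdot_mxtrace hsdotE.
by apply: eq_bigr => a _; apply: eq_bigr => b _; rewrite !mxE mulrC.
Qed.

End KrausBlocks.

Lemma free3P (F : fieldType) (vT : vectType F) (x y z : vT) (a b c : F) :
  free [:: x; y; z] -> a *: x + b *: y + c *: z = 0 -> [/\ a = 0, b = 0 & c = 0].
Proof.
move=> free_xyz xyz0.
move/freeP: (free_xyz : free (in_tuple [:: x; y; z])) => {}free_xyz.
have := free_xyz (fun i : 'I_3 => [:: a; b; c]`_i).
rewrite !big_ord_recr big_ord0 /= add0r => /(_ xyz0) coef0.
by split; [exact: (coef0 0) | exact: (coef0 1) | exact: (coef0 2)].
Qed.

Lemma free3_tens_inj (F : fieldType) n k (v w : 'M[F]_n) (M0 M1 M2 N0 N1 N2 : 'M[F]_k) :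
  free [:: 1%:M; v; w] ->
  1%:M *t M0 + v *t M1 + w *t M2 = 1%:M *t N0 + v *t N1 + w *t N2 ->
  [/\ M0 = N0, M1 = N1 & M2 = N2].
Proof.
move=> free_vw eqMN.
suff coef_eq a b : [/\ M0 a b = N0 a b, M1 a b = N1 a b & M2 a b = N2 a b].
  by split; apply/matrixP => a b; case: (coef_eq a b).
have : (M0 a b - N0 a b) *: 1%:M + (M1 a b - N1 a b) *: v + (M2 a b - N2 a b) *: w = 0.
  apply/matrixP => i j; move/matrixP/(_ (mxtens_index (i, a)) (mxtens_index (j, b))): eqMN.
  by rewrite !mxE !mxtens_indexK /= => /eqP; rewrite -subr_eq0 => /eqP <-; ring.
by move/(free3P free_vw) => [/subr0_eq -> /subr0_eq -> /subr0_eq ->].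
Qed.

Section UnitaryTensorPair.
Variables (R : realType) (n k : nat) (u1 u2 : 'M[R[i]]_n) (A B : 'M[R[i]]_k).
Hypotheses (u1_unitary : unitary_mx u1) (u2_unitary : unitary_mx u2).
Hypothesis free_u12 : free [:: 1%:M; adjmx u1 *m u2; adjmx u2 *m u1].
Local Notation U := (u1 *t A + u2 *t B).

Let tens_one_eq :
  1%:M = 1%:M *t 1%:M + (adjmx u1 *m u2) *t 0 + (adjmx u2 *m u1) *t (0 : 'M_k).
Proof. by rewrite !tensmx0 !addr0 tensmx1. Qed.

Lemma unitary_tens2_adjl : unitary_mx U -> adjmx A *m A + adjmx B *m B = 1%:M.
Proof.
case: u1_unitary u2_unitary => _ u1'u1 [_ u2'u2] [_ U'U].
move: U'U; rewrite adjmxD !adjmx_tens mulmxDl !mulmxDr !tensmx_mul u1'u1 u2'u2.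
rewrite [_ *t (adjmx B *m A) + _]addrC addrACA -tensmxDr addrA tens_one_eq.
by case/(free3_tens_inj free_u12).
Qed.

(* Conjugating U U^* = 1 by u1^* (x) 1 moves its coefficients onto the free family
   1, u1^* u2, u2^* u1. *)
Lemma unitary_tens2_orth : unitary_mx U -> A *m adjmx B = 0.
Proof.
case: u1_unitary u2_unitary => u1u1' u1'u1 [u2u2' _] [UU' _].
move: UU'; rewrite adjmxD !adjmx_tens mulmxDl !mulmxDr !tensmx_mul u1u1' u2u2'.
move/(congr1 (fun X => (adjmx u1 *t 1%:M) *m X *m (u1 *t (1%:M : 'M_k)))).
rewrite !mulmxDr !mulmxDl !tensmx_mul !mul1mx !mulmx1.
rewrite !mulmxA u1'u1 mul1mx -!mulmxA u1'u1 mulmx1.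
rewrite tensmx_mul u1'u1 mul1mx tensmx1 [_ *t (B *m adjmx A) + _]addrC addrACA -tensmxDr.
rewrite [_ *t (A *m adjmx B) + _]addrC addrA tens_one_eq.
by case/(free3_tens_inj free_u12).
Qed.

Lemma unitary_tens2_idem : unitary_mx U ->
  (adjmx A *m A) *m (adjmx A *m A) = adjmx A *m A.
Proof.
move=> U_unitary; have AB'0 := unitary_tens2_orth U_unitary.
have P_eq : adjmx A *m A = 1%:M - adjmx B *m B.
  by rewrite -(unitary_tens2_adjl U_unitary) addrK.
by rewrite {2}P_eq mulmxBr mulmx1 -mulmxA (mulmxA A) AB'0 mul0mx mulmx0 subr0.
Qed.

End UnitaryTensorPair.

Lemma mxtrace_pid (F : fieldType) k r : (r <= k)%N -> \tr (pid_mx r : 'M[F]_k) = r%:R.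
Proof.
move=> le_rk; rewrite /mxtrace; under eq_bigr do rewrite mxE eqxx andTb.
rewrite (eq_bigr (fun i : 'I_k => if (i < r)%N then 1 else 0)) => [|i _].
  by rewrite -big_mkcond -(big_ord_widen _ (fun _ => 1)) // sumr_const card_ord.
by case: ltnP.
Qed.

Lemma mxtrace_idem (F : fieldType) k (P : 'M[F]_k) : P *m P = P -> \tr P = (\rank P)%:R.
Proof.
move=> P_idem; have rkP := rank_leq_row P.
have [L_unit R_unit] := (col_ebase_unit P, row_ebase_unit P).
set L := col_ebase P in L_unit *; set M := row_ebase P in R_unit *.
set r := \rank P in rkP *.
have P_eq : P = L *m pid_mx r *m M by rewrite mulmx_ebase.
have pid_eq : pid_mx r *m M *m L *m pid_mx r = pid_mx r :> 'M_k.
  have : L *m (pid_mx r *m M *m L *m pid_mx r) *m M = L *m pid_mx r *m M.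
    by rewrite -P_eq -[RHS]P_idem [in RHS]P_eq !mulmxA.
  move/(canRL (mulmxK R_unit))/(canRL (mulKmx L_unit)) => ->.
  by rewrite mulmxK // mulKmx.
rewrite P_eq -mulmxA mxtrace_mulC -[X in \tr (X *m _ *m _)](@pid_mx_id _ k k k r) //.
by rewrite -!mulmxA mxtrace_mulC !mulmxA pid_eq mxtrace_pid.
Qed.

Lemma gram_det_unitary_neq0 (R : realType) n (u1 u2 : 'M[R[i]]_n) :
  unitary_mx u1 -> free [:: 1%:M; adjmx u1 *m u2; adjmx u2 *m u1] ->
  gram_det u1 u2 != 0.
Proof.
move=> [_ u1'u1] free_u; have one_neq0 := free_not0 free_u (mem_head _ _).
apply: gram_det_neq0 => [|a].
  by apply: contra_neq one_neq0 => u1_0; rewrite -u1'u1 u1_0 mulmx0.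
apply/eqP => u2_eq; have := free3P (a := a) (b := -1) (c := 0) free_u.
rewrite u2_eq -scalemxAr u1'u1 scale0r addr0 scaleN1r subrr.
by case=> // _ /eqP; rewrite oppr_eq0 oner_eq0.
Qed.

Lemma k_noisy_mixture_weight (R : realType) n k (u1 u2 : 'M[R[i]]_n) (t : R) :
  (0 < k)%N -> unitary_mx u1 -> unitary_mx u2 ->
  free [:: 1%:M; adjmx u1 *m u2; adjmx u2 *m u1] ->
  k_noisy k (fun x =>
    (t%:C)%C *: (u1 *m x *m adjmx u1) + ((1 - t)%:C)%C *: (u2 *m x *m adjmx u2)) ->
  exists r : nat, t = r%:R / k%:R.
Proof.
move=> k_gt0 u1_unitary u2_unitary free_u [U [U_unitary U_dilates]].
have D0 := gram_det_unitary_neq0 u1_unitary free_u.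
have U_eq := tens_span2_decomp k_gt0 U_dilates D0.
rewrite U_eq in U_unitary.
have P_idem := unitary_tens2_idem u1_unitary u2_unitary free_u U_unitary.
exists (\rank (adjmx (span2_coef U u1 u2) *m span2_coef U u1 u2)); apply: complexI.
have k_neq0 : (k%:R : R[i]) != 0 by rewrite pnatr_eq0 -lt0n.
rewrite rmorphM fmorphV /= !rmorph_nat -(mxtrace_idem P_idem).
rewrite (mxtrace_span2_coef k_gt0 U_dilates D0).
by rewrite mulrAC divff // mul1r.
Qed.

Lemma ptrace_normD (R : realType) n k (X Y : 'M[R[i]]_(n * k)) :
  ptrace_norm k (X + Y) = ptrace_norm k X + ptrace_norm k Y.
Proof.
apply/matrixP => i j; rewrite !mxE -mulrDr -big_split.
by congr (_ * _); apply: eq_bigr => a _; rewrite mxE.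
Qed.

Lemma ptrace_norm_tens (R : realType) n k (X : 'M[R[i]]_n) (M : 'M[R[i]]_k) :
  ptrace_norm k (X *t M) = (k%:R^-1 * \tr M) *: X.
Proof.
apply/matrixP => i j; rewrite !mxE -mulrA big_distrl; congr (_ * _).
by apply: eq_bigr => a _; rewrite tensmxE mulrC.
Qed.

Section ProjectionDilation.
Variables (R : realType) (n k : nat) (u1 u2 : 'M[R[i]]_n) (P : 'M[R[i]]_k).
Hypotheses (P_herm : adjmx P = P) (P_idem : P *m P = P).
Local Notation Q := (1%:M - P).

Let Q_herm : adjmx Q = Q. Proof. by rewrite adjmxB adjmx1 P_herm. Qed.
Let Q_idem : Q *m Q = Q.
Proof. by rewrite mulmxBl mul1mx mulmxBr mulmx1 P_idem subrr subr0. Qed.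
Let PQ0 : P *m Q = 0. Proof. by rewrite mulmxBr mulmx1 P_idem subrr. Qed.
Let QP0 : Q *m P = 0. Proof. by rewrite mulmxBl mul1mx P_idem subrr. Qed.

Let tens2_mul_adjmx (v1 v2 : 'M[R[i]]_n) :
  v1 *m adjmx v1 = 1%:M -> v2 *m adjmx v2 = 1%:M ->
  (v1 *t P + v2 *t Q) *m (adjmx v1 *t P + adjmx v2 *t Q) = 1%:M.
Proof.
move=> v1v1' v2v2'; rewrite mulmxDl !mulmxDr !tensmx_mul v1v1' v2v2'.
by rewrite P_idem Q_idem PQ0 QP0 !tensmx0 addr0 add0r -tensmxDr subrKC tensmx1.
Qed.

Lemma unitary_tens_proj :
  unitary_mx u1 -> unitary_mx u2 -> unitary_mx (u1 *t P + u2 *t Q).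
Proof.
move=> [u1u1' u1'u1] [u2u2' u2'u2].
rewrite /unitary_mx adjmxD !adjmx_tens P_herm Q_herm.
split; first exact: (tens2_mul_adjmx u1u1' u2u2').
by have := @tens2_mul_adjmx (adjmx u1) (adjmx u2); rewrite !adjmxK; apply.
Qed.

Lemma ptrace_norm_tens_proj (x : 'M[R[i]]_n) :
  ptrace_norm k ((u1 *t P + u2 *t Q) *m (x *t 1%:M) *m adjmx (u1 *t P + u2 *t Q)) =
  (k%:R^-1 * \tr P) *: (u1 *m x *m adjmx u1) +
    (k%:R^-1 * \tr Q) *: (u2 *m x *m adjmx u2).
Proof.
rewrite adjmxD !adjmx_tens P_herm Q_herm !mulmxDl !tensmx_mul !mulmx1.
rewrite !mulmxDr !tensmx_mul.
by rewrite P_idem Q_idem PQ0 QP0 !tensmx0 addr0 add0r ptrace_normD !ptrace_norm_tens.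
Qed.

End ProjectionDilation.

Lemma k_noisy_mixture_pid (R : realType) n k (u1 u2 : 'M[R[i]]_n) (t : R) (r : nat) :
  (0 < k)%N -> (r <= k)%N -> t = r%:R / k%:R -> unitary_mx u1 -> unitary_mx u2 ->
  k_noisy k (fun x =>
    (t%:C)%C *: (u1 *m x *m adjmx u1) + ((1 - t)%:C)%C *: (u2 *m x *m adjmx u2)).
Proof.
move=> k_gt0 le_rk t_eq u1_unitary u2_unitary.
have pid_herm : adjmx (pid_mx r : 'M[R[i]]_k) = pid_mx r by rewrite adjmx_pid.
have pid_idem : (pid_mx r : 'M[R[i]]_k) *m (pid_mx r : 'M_k) = pid_mx r.
  by rewrite pid_mx_id.
exists (u1 *t pid_mx r + u2 *t (1%:M - pid_mx r)).
split=> [|x]; first exact: unitary_tens_proj.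
rewrite ptrace_norm_tens_proj // [\tr (_ - _)]raddfB /= mxtrace1 mxtrace_pid //.
have k_neq0 : (k%:R : R[i]) != 0 by rewrite pnatr_eq0 -lt0n.
rewrite t_eq rmorphB rmorph1 rmorphM fmorphV /= !rmorph_nat.
by congr (_ *: _ + _ *: _); field.
Qed.

Theorem mainTheorem3 (R : realType) (n : nat) (u1 u2 : 'M[R[i]]_n) (t : R) :
  (3 <= n)%N ->
  unitary_mx u1 -> unitary_mx u2 ->
  free [:: (1%:M : 'M[R[i]]_n); adjmx u1 *m u2; adjmx u2 *m u1] ->
  0 < t < 1 ->
  forall k : nat, (2 <= k)%N ->
    (k_noisy k (fun x : 'M[R[i]]_n =>
        (t%:C)%C *: (u1 *m x *m adjmx u1) + ((1 - t)%:C)%C *: (u2 *m x *m adjmx u2))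
     <-> exists m : int, t = m%:~R / k%:R).
Proof.
move=> _ u1_unitary u2_unitary free_u /andP[t_gt0 t_lt1] k k_ge2.
have k_gt0 : (0 < k)%N by apply: leq_trans k_ge2.
split=> [/(k_noisy_mixture_weight k_gt0 u1_unitary u2_unitary free_u) [r ->] | [m t_eq]].
  by exists r.
have tk_eq : (m%:~R : R) = t * k%:R by rewrite t_eq mulfVK // pnatr_eq0 -lt0n.
have m_gt0 : (0 < m)%R by rewrite -(ltr0z R) tk_eq mulr_gt0 // ltr0n.
case: m m_gt0 t_eq tk_eq => // r _ t_eq tk_eq.
apply: (k_noisy_mixture_pid k_gt0 _ t_eq) => //.
by rewrite -(ler_nat R) [_%:R]tk_eq ler_piMl // ?ltW // ler0n.
Qed.
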